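(* Let $\mathcal{M}\subseteq\mathbb{S}^n$. Then $\mathcal{T}(\mathcal{M})$ is rank-one generated if and only if for every nonzero $X\in\mathcal{T}(\mathcal{M})$ we have $\mathrm{range}(X)\cap\mathcal{N}(\mathcal{M})\neq\{0\}$.
   Context: $\mathbb{S}^n$ denotes real symmetric $n\times n$ matrices with $\langle A,B\rangle=\mathrm{tr}(AB)$, $\mathbb{S}^n_+$ the PSD cone. For $\mathcal{M}\subseteq\mathbb{S}^n$, $\mathcal{T}(\mathcal{M})=\{X\in\mathbb{S}^n_+:\langle M,X\rangle=0\ \forall M\in\mathcal{M}\}$ and $\mathcal{N}(\mathcal{M})=\{x\in\mathbb{R}^n:x^\top Mx=0\ \forall M\in\mathcal{M}\}$. A closed convex cone $\mathcal{S}\subseteq\mathbb{S}^n_+$ is rank-one generated (ROG) if $\mathcal{S}=\mathrm{conv}(\mathcal{S}\cap\{xx^\top:x\in\mathbb{R}^n\})$. *)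

From mathcomp Require Import all_boot all_order all_algebra.
From mathcomp Require Import boolp classical_sets reals.
Set Implicit Arguments. Unset Strict Implicit. Unset Printing Implicit Defensive.
Import Order.TTheory GRing.Theory Num.Theory.
Local Open Scope ring_scope.
Local Open Scope classical_set_scope.

Section Defs.
Variables (R : realType) (n : nat).

Definition sym_mx (A : 'M[R]_n) : Prop := A^T = A.

Definition frob (A B : 'M[R]_n) : R := \tr (A *m B).

Definition qform (A : 'M[R]_n) (x : 'cV[R]_n) : R := (x^T *m A *m x) 0 0.

Definition psd (A : 'M[R]_n) : Prop :=
  sym_mx A /\ forall x : 'cV[R]_n, 0 <= qform A x.

Definition Tset (Ms : set 'M[R]_n) : set 'M[R]_n :=
  [set X | psd X /\ forall M, Ms M -> frob M X = 0].

Definition Nset (Ms : set 'M[R]_n) : set 'cV[R]_n :=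
  [set x | forall M, Ms M -> qform M x = 0].

Definition rank_one_mats : set 'M[R]_n := [set x *m x^T | x in [set: 'cV[R]_n]].

Definition conv_hull (A : set 'M[R]_n) : set 'M[R]_n :=
  [set X | exists (k : nat) (lam : 'I_k -> R) (P : 'I_k -> 'M[R]_n),
      (forall i, 0 <= lam i) /\ \sum_(i < k) lam i = 1 /\
      (forall i, A (P i)) /\ X = \sum_(i < k) lam i *: P i].

Definition range_mx (X : 'M[R]_n) : set 'cV[R]_n :=
  [set v | exists y : 'cV[R]_n, v = X *m y].

Definition ROG (S : set 'M[R]_n) : Prop :=
  S = conv_hull (S `&` rank_one_mats).

End Defs.

From mathcomp Require Import all_boot all_order all_algebra.
From mathcomp Require Import boolp classical_sets reals.
From mathcomp Require Import ring lra zify.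
Set Implicit Arguments. Unset Strict Implicit. Unset Printing Implicit Defensive.
Import Order.TTheory GRing.Theory Num.Theory.
Local Open Scope ring_scope.
Local Open Scope classical_set_scope.

(* If T(M) is rank-one generated, a nonzero X in T(M) is a positive
   combination of matrices x x^T in T(M); each such x lies in N(M), and in
   range(X) because the range of a summand of a PSD sum lies in the range of
   the sum.  Conversely, let v = X y be a nonzero vector of range(X) ∩ N(M)
   and c = y^T X y > 0.  By Cauchy-Schwarz X - c^-1 v v^T is still PSD, it is
   still orthogonal to M because v ∈ N(M), and its rank is smaller since y^T
   enters its left kernel.  Induction on the rank writes every X in T(M) as a
   finite sum of rank-one elements of T(M), and such a sum is a convex
   combination because T(M) ∩ {x x^T} is a cone. *)

Section QuadraticForms.
Variables (R : realType) (n : nat).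
Implicit Types (M X Y : 'M[R]_n) (x y z : 'cV[R]_n).

Lemma frobB M X Y : frob M (X - Y) = frob M X - frob M Y.
Proof. by rewrite /frob mulmxBr linearB. Qed.

Lemma frobZ M a X : frob M (a *: X) = a * frob M X.
Proof. by rewrite /frob -scalemxAr linearZ. Qed.

Lemma frob_sum M I (r : seq I) (P : pred I) (F : I -> 'M[R]_n) :
  frob M (\sum_(i <- r | P i) F i) = \sum_(i <- r | P i) frob M (F i).
Proof. by rewrite /frob mulmx_sumr linear_sum. Qed.

Lemma frob_rank1 M x : frob M (x *m x^T) = qform M x.
Proof. by rewrite /frob /qform mulmxA mxtrace_mulC mulmxA /mxtrace big_ord1. Qed.

Lemma qformB X Y z : qform (X - Y) z = qform X z - qform Y z.
Proof. by rewrite /qform mulmxBr mulmxBl !mxE. Qed.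

Lemma qformZ a X z : qform (a *: X) z = a * qform X z.
Proof. by rewrite /qform -scalemxAr -scalemxAl !mxE. Qed.

Lemma qform_sum I (r : seq I) (P : pred I) (F : I -> 'M[R]_n) z :
  qform (\sum_(i <- r | P i) F i) z = \sum_(i <- r | P i) qform (F i) z.
Proof. by rewrite /qform mulmx_sumr mulmx_suml summxE. Qed.

Lemma qform_rank1 x z : qform (x *m x^T) z = ((z^T *m x) 0 0) ^+ 2.
Proof.
have zTx : x^T *m z = (z^T *m x)^T by rewrite trmx_mul trmxK.
by rewrite /qform mulmxA -mulmxA zTx [LHS]mxE big_ord1 [X in _ * X]mxE.
Qed.

Lemma qform_addZ X y z t : sym_mx X ->
  qform X (z + t *: y) =
  qform X z + 2 * t * (z^T *m X *m y) 0 0 + t ^+ 2 * qform X y.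
Proof.
move=> symX; have yXz : y^T *m X *m z = (z^T *m X *m y)^T.
  by rewrite !trmx_mul trmxK symX mulmxA.
rewrite /qform !linearD !linearZ /= !mulmxDl -!scalemxAl yXz !mxE; ring.
Qed.

Lemma psd_rank1 x : psd (x *m x^T).
Proof.
split; first by rewrite /sym_mx trmx_mul trmxK.
by move=> z; rewrite qform_rank1 sqr_ge0.
Qed.

Lemma psdZ a X : 0 <= a -> psd X -> psd (a *: X).
Proof.
move=> a_ge0 [symX qX_ge0]; split; first by rewrite /sym_mx linearZ /= symX.
by move=> z; rewrite qformZ mulr_ge0.
Qed.

Lemma psd_sum I (r : seq I) (P : pred I) (F : I -> 'M[R]_n) :
  (forall i, P i -> psd (F i)) -> psd (\sum_(i <- r | P i) F i).
Proof.
move=> psdF; split.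
  by rewrite /sym_mx linear_sum; apply: eq_bigr => i /psdF [].
by move=> z; rewrite qform_sum sumr_ge0 // => i /psdF [].
Qed.

Lemma tr_mul_self_eq0 z : (z^T *m z) 0 0 = 0 -> z = 0.
Proof.
rewrite mxE => sum_sq0; apply/matrixP => i j; rewrite (ord1 j) mxE.
have sq_ge0 k : true -> 0 <= z^T 0 k * z k 0 by rewrite mxE -expr2 sqr_ge0.
have /eqP := psumr_eq0P sq_ge0 sum_sq0 (i := i) isT.
by rewrite mxE -expr2 sqrf_eq0 => /eqP.
Qed.

Lemma psd_cauchy_schwarz X y z : psd X ->
  ((z^T *m X *m y) 0 0) ^+ 2 <= qform X z * qform X y.
Proof.
case=> symX qX_ge0.
set a := qform X z; set b := (z^T *m X *m y) 0 0; set c := qform X y.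
have quad_ge0 t : 0 <= a + 2 * t * b + t ^+ 2 * c by rewrite -qform_addZ.
have [c0|c_neq0] := eqVneq c 0.
  have [->|b_neq0] := eqVneq b 0; first by rewrite expr0n /= c0 mulr0.
  have := quad_ge0 (- (a + 1) / (2 * b)); rewrite c0 mulr0 addr0.
  have -> : 2 * (- (a + 1) / (2 * b)) * b = - (a + 1) by field.
  lra.
have c_gt0 : 0 < c by rewrite lt0r c_neq0 qX_ge0.
have := quad_ge0 (- b / c).
have -> : a + 2 * (- b / c) * b + (- b / c) ^+ 2 * c = a - b ^+ 2 / c by field.
by rewrite subr_ge0 ler_pdivrMr.
Qed.

Lemma psd_qform_eq0 X y : psd X -> qform X y = 0 -> X *m y = 0.
Proof.
move=> psdX qy0; have symX : X^T = X by case: psdX.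
have := psd_cauchy_schwarz y (X *m y) psdX.
rewrite qy0 mulr0 => sq_le0.
apply: tr_mul_self_eq0; apply/eqP; rewrite -sqrf_eq0 eq_le sqr_ge0 andbT.
by move: sq_le0; rewrite trmx_mul symX !mulmxA.
Qed.

Lemma psd_sub_rank1 X y : psd X -> 0 < qform X y ->
  psd (X - (qform X y)^-1 *: (X *m y *m (X *m y)^T)).
Proof.
move=> psdX c_gt0; have symX : X^T = X by case: psdX.
split; first by rewrite /sym_mx linearB linearZ /= trmx_mul trmxK symX.
move=> z; rewrite qformB qformZ qform_rank1 subr_ge0 mulrC ler_pdivrMr //.
by rewrite mulmxA psd_cauchy_schwarz.
Qed.

Lemma rank_sub_rank1 X y : sym_mx X -> qform X y != 0 ->
  (\rank (X - (qform X y)^-1 *: (X *m y *m (X *m y)^T))%R < \rank X)%N.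
Proof.
move=> symX c_neq0; set v := X *m y; set Y := X - _.
have yTX : y^T *m X = v^T by rewrite trmx_mul symX.
have kerXY : (kermx X <= kermx Y)%MS.
  apply/sub_kermxP; rewrite mulmxBr mulmx_ker -scalemxAr mulmxA.
  by rewrite /v mulmxA mulmx_ker !mul0mx scaler0 subr0.
have yT_kerY : (y^T <= kermx Y)%MS.
  apply/sub_kermxP; rewrite mulmxBr yTX -scalemxAr mulmxA.
  have -> : y^T *m v = (qform X y)%:M by rewrite [LHS]mx11_scalar /v mulmxA.
  by rewrite mul_scalar_mx scalerA mulVf // scale1r subrr.
have yT_kerX : ~~ (y^T <= kermx X)%MS.
  apply: contra c_neq0 => /sub_kermxP.
  by rewrite /qform yTX => ->; rewrite mul0mx mxE.
have : (kermx X < kermx Y)%MS.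
  by rewrite ltmxE kerXY; apply: contra yT_kerX => /(submx_trans yT_kerY).
rewrite ltmxErank kerXY /= !mxrank_ker.
by have := rank_leq_row X; have := rank_leq_row Y; lia.
Qed.

Lemma range_mxP X x :
  range_mx X x <-> (forall u : 'rV[R]_n, u *m X = 0 -> u *m x = 0).
Proof.
split=> [[y ->] u uX0 | ker_x]; first by rewrite mulmxA uX0 mul0mx.
have : (x^T <= X^T)%MS.
  rewrite submxE -trmx_eq0 trmx_mul trmxK; apply/eqP/row_matrixP => i.
  rewrite row_mul row0; apply: ker_x; rewrite -row_mul.
  by rewrite -[X in _ *m X]trmxK -trmx_mul mulmx_coker trmx0 row0.
by case/submxP => D xD; exists D^T; rewrite -[x]trmxK xD trmx_mul trmxK.
Qed.

Lemma range_psd_summand k (F : 'I_k -> 'M[R]_n) i :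
  (forall j, psd (F j)) -> range_mx (F i) `<=` range_mx (\sum_j F j).
Proof.
move=> psdF x /range_mxP Fi_x; apply/range_mxP => u uS0; apply: Fi_x.
have : qform (\sum_j F j) u^T = 0 by rewrite /qform trmxK uS0 mul0mx mxE.
rewrite qform_sum => /(psumr_eq0P (fun j _ => proj2 (psdF j) u^T)) qF0.
have symFi : (F i)^T = F i by case: (psdF i).
move/(congr1 trmx): (psd_qform_eq0 (psdF i) (qF0 i isT)).
by rewrite trmx_mul trmxK symFi trmx0.
Qed.

Lemma range_scaled_rank1 a x : a != 0 -> range_mx (a *: (x *m x^T)) x.
Proof.
move=> a_neq0; apply/range_mxP => u uP0.
have : qform (a *: (x *m x^T)) u^T = 0 by rewrite /qform trmxK uP0 mul0mx mxE.
rewrite qformZ qform_rank1 trmxK => /eqP.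
rewrite mulf_eq0 (negbTE a_neq0) sqrf_eq0 => /eqP ux0.
by apply/matrixP => i j; rewrite (ord1 i) (ord1 j) ux0 mxE.
Qed.

End QuadraticForms.

Section ConicHull.
Variables (R : realType) (n : nat).

Lemma conv_hull_cone_sum (A : set 'M[R]_n) (s : seq 'M[R]_n) :
  A 0 -> (forall a P, 0 <= a -> A P -> A (a *: P)) ->
  (forall P, P \in s -> A P) -> conv_hull A (\sum_(P <- s) P).
Proof.
move=> A0 coneA sA; set s0 := 0 :: s; set k := size s0.
have k_neq0 : k%:R != 0 :> R by rewrite pnatr_eq0.
exists k, (fun=> k%:R^-1), (fun i => k%:R *: nth 0 s0 i).
split; first by move=> i; rewrite invr_ge0 ler0n.
split; first by rewrite sumr_const card_ord -[_ *+ k]mulr_natr mulVf.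
split.
  move=> i; apply: coneA; first exact: ler0n.
  by have := mem_nth 0 (ltn_ord i); rewrite inE => /orP[/eqP -> | /sA].
have -> : \sum_(P <- s) P = \sum_(P <- s0) P by rewrite big_cons add0r.
rewrite (big_nth 0) big_mkord.
by apply: eq_bigr => i _; rewrite scalerA mulVf // scale1r.
Qed.

End ConicHull.

Section RankOneGenerators.
Variables (R : realType) (n : nat) (Ms : set 'M[R]_n).
Implicit Types (X P : 'M[R]_n) (x : 'cV[R]_n).

Lemma Tset_rank1P x : Tset Ms (x *m x^T) <-> Nset Ms x.
Proof.
split=> [[_ frob0] M /frob0 | Nx]; first by rewrite frob_rank1.
by split=> [|M /Nx]; [exact: psd_rank1 | rewrite frob_rank1].
Qed.

Lemma TsetZ a X : 0 <= a -> Tset Ms X -> Tset Ms (a *: X).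
Proof.
move=> a_ge0 [psdX frob0]; split=> [|M /frob0]; first exact: psdZ.
by rewrite frobZ => ->; rewrite mulr0.
Qed.

Lemma Tset_sum I (r : seq I) (Q : pred I) (F : I -> 'M[R]_n) :
  (forall i, Q i -> Tset Ms (F i)) -> Tset Ms (\sum_(i <- r | Q i) F i).
Proof.
move=> TF; split; first by apply: psd_sum => i /TF [].
by move=> M MsM; rewrite frob_sum big1 // => i /TF [_ ->].
Qed.

Lemma conv_hull_sub_Tset (A : set 'M[R]_n) :
  A `<=` Tset Ms -> conv_hull A `<=` Tset Ms.
Proof.
move=> AT _ [k [lam [P [lam_ge0 [_ [AP ->]]]]]].
by apply: Tset_sum => i _; apply: TsetZ => //; apply: AT.
Qed.

Lemma rank_one_matsZ a P : 0 <= a -> rank_one_mats P -> rank_one_mats (a *: P).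
Proof.
move=> a_ge0 [x _ <-]; exists (Num.sqrt a *: x) => //.
by rewrite linearZ /= -scalemxAl -scalemxAr scalerA -expr2 sqr_sqrtr.
Qed.

Lemma conv_hull_rank1_range_Nset X :
  conv_hull (Tset Ms `&` @rank_one_mats R n) X -> X != 0 ->
  exists2 v : 'cV[R]_n, (range_mx X `&` Nset Ms) v & v != 0.
Proof.
move=> [k [lam [P [lam_ge0 [_ [GP ->]]]]]] X_neq0.
have /existsP [i Pi_neq0] : [exists i, lam i *: P i != 0].
  apply: contraR X_neq0 => /existsPn P0.
  by rewrite big1 // => i _; apply/eqP/negPn.
have psdF j : psd (lam j *: P j) by apply: psdZ => //; case: (GP j) => -[].
case: (GP i) => TPi [x _ xxP]; rewrite -xxP in TPi Pi_neq0.
exists x; last by apply: contraNneq Pi_neq0 => ->; rewrite mul0mx scaler0.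
split; last exact/Tset_rank1P.
apply: (@range_psd_summand R n k (fun j => lam j *: P j) i psdF); rewrite -xxP.
by apply: range_scaled_rank1; apply: contraNneq Pi_neq0 => ->; rewrite scale0r.
Qed.

Lemma Tset_sum_rank1 :
  (forall X, Tset Ms X -> X != 0 ->
     exists2 v : 'cV[R]_n, (range_mx X `&` Nset Ms) v & v != 0) ->
  forall X, Tset Ms X -> exists2 s : seq 'M[R]_n,
    (forall P, P \in s -> (Tset Ms `&` @rank_one_mats R n) P) &
    X = \sum_(P <- s) P.
Proof.
move=> range_N X; have [r] := ubnP (\rank X); elim: r X => // r IH X rankX TX.
have [-> | X_neq0] := eqVneq X 0; first by exists [::]; rewrite ?big_nil.
have [v [[y vXy] Nv] v_neq0] := range_N X TX X_neq0.
have [psdX frobX0] := TX; set c := qform X y.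
have c_gt0 : 0 < c.
  rewrite lt0r (proj2 psdX) andbT; apply: contra v_neq0 => /eqP c0.
  by rewrite vXy psd_qform_eq0.
set P := c^-1 *: (v *m v^T).
have TP : Tset Ms P by apply: TsetZ; [rewrite invr_ge0 ltW | exact/Tset_rank1P].
have TXP : Tset Ms (X - P).
  split; first by rewrite /P vXy; exact: psd_sub_rank1.
  by move=> M MsM; rewrite frobB frobX0 // (proj2 TP) // subr0.
have rank_XP : (\rank (X - P)%R < r)%N.
  have := rank_sub_rank1 (proj1 psdX) (lt0r_neq0 c_gt0).
  by rewrite -/c -vXy -/P; lia.
have [s sG XPs] := IH (X - P) rank_XP TXP.
exists (P :: s); last by rewrite big_cons -XPs addrC subrK.
move=> Q; rewrite inE => /orP[/eqP -> | /sG //]; split=> //.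
by apply: rank_one_matsZ; [rewrite invr_ge0 ltW | exists v].
Qed.

End RankOneGenerators.

Theorem corollary2p26 (R : realType) (n : nat) (Ms : set 'M[R]_n)
  (HMs : forall M, Ms M -> sym_mx M) :
  ROG (Tset Ms) <->
  (forall X : 'M[R]_n, Tset Ms X -> X != 0 ->
     exists2 v : 'cV[R]_n, (range_mx X `&` Nset Ms) v & v != 0).
Proof.
split=> [rog X TX | range_N].
  by apply: conv_hull_rank1_range_Nset; rewrite -rog.
apply/seteqP; split; last by apply: conv_hull_sub_Tset => ? [].
move=> X /(Tset_sum_rank1 range_N) [s sG ->].
apply: conv_hull_cone_sum sG.
  rewrite -(mul0mx n (0 : 'cV[R]_n)^T).
  by split; [apply/Tset_rank1P => M _; rewrite /qform mulmx0 mxE | exists 0].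
by move=> a P a_ge0 [TP rP]; split; [exact: TsetZ | exact: rank_one_matsZ].
Qed.
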